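(* Fix $0<\varepsilon<\frac1{10}$. Let $n$ be a positive integer, $m=\lceil n/\log^8 n\rceil$, and let $\pi_R,\pi_B:[n]\to[m]$ be independent uniformly random functions. Let $s=\lceil\varepsilon n\rceil$ and let $\mathcal E(\varepsilon)$ be the event that for every $s$-pairing $P$ in $[n]$, at least one of $\pi_R,\pi_B$ is $\varepsilon$-respectful of $P$. Then $\mathcal E(\varepsilon)$ holds with probability tending to $1$ as $n\to\infty$.
   Context: Logarithms are natural. An $s$-pairing in $[n]$ is a collection $\{(u_1,v_1),\dots,(u_s,v_s)\}$ of pairs where $u_1,\dots,u_s,v_1,\dots,v_s$ are distinct elements of $[n]$. A map $\pi:[n]\to[m]$ is $\varepsilon$-respectful of such a pairing if there is $I\subseteq[s]$ with $|I|\geq\varepsilon s$ such that $\pi(u_i)\neq\pi(v_i)$ for all $i\in I$ and the unordered pairs $\{\pi(u_i),\pi(v_i)\}$, $i\in I$, are pairwise distinct. *)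

From HB Require Import structures.
From mathcomp Require Import all_boot all_order all_algebra.
From mathcomp Require Import all_classical all_reals all_analysis.
Set Implicit Arguments. Unset Strict Implicit. Unset Printing Implicit Defensive.
Import Order.TTheory GRing.Theory Num.Theory.
Local Open Scope ring_scope.

Definition mval (R : realType) (n : nat) : nat :=
  `|Num.ceil ((n%:R : R) / (ln (n%:R : R)) ^+ 8)|%N.

Definition sval (R : realType) (eps : R) (n : nat) : nat :=
  `|Num.ceil (eps * n%:R)|%N.

(* An s-pairing {(u_1,v_1),...,(u_s,v_s)} in [n] = 'I_n, given by the
   two maps i |-> u_i and i |-> v_i, with all 2s elements distinct. *)
Definition is_pairing (n s : nat) (u v : 'I_s -> 'I_n) : bool :=
  [&& injectiveb u, injectiveb v & [forall i, forall j, u i != v j]].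

Definition respectful (R : realType) (eps : R) (n m s : nat)
  (pi : 'I_n -> 'I_m) (u v : 'I_s -> 'I_n) : bool :=
  [exists I : {set 'I_s},
    [&& eps * s%:R <= (#|I|%:R : R),
        [forall i in I, pi (u i) != pi (v i)] &
        [forall i in I, forall j in I,
           (i != j) ==> ([set pi (u i); pi (v i)] != [set pi (u j); pi (v j)])]]].

Definition eventE (R : realType) (eps : R) (n m s : nat)
  (piR piB : {ffun 'I_n -> 'I_m}) : bool :=
  [forall u : {ffun 'I_s -> 'I_n}, forall v : {ffun 'I_s -> 'I_n},
     is_pairing u v ==> (respectful eps piR u v || respectful eps piB u v)].

(* Probability of E(eps) when (pi_R, pi_B) is uniform on pairs of maps
   [n] -> [m] (i.e. pi_R, pi_B independent and uniform). *)
Definition probE (R : realType) (eps : R) (n : nat) : R :=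
  let m := mval R n in
  let s := sval eps n in
  (#|[pred p : {ffun 'I_n -> 'I_m} * {ffun 'I_n -> 'I_m} | eventE eps s p.1 p.2]|%:R
   / #|{: {ffun 'I_n -> 'I_m} * {ffun 'I_n -> 'I_m}}|%:R).

From Pilot Require Import Defs.
From HB Require Import structures.
From mathcomp Require Import all_boot all_order all_algebra.
From mathcomp Require Import all_classical all_reals all_analysis.
From mathcomp Require Import perm zify ring lra.
Set Implicit Arguments. Unset Strict Implicit. Unset Printing Implicit Defensive.
Import Order.TTheory GRing.Theory Num.Theory.
Import numFieldNormedType.Exports.

(* If neither colouring respects an s-pairing, then for each of them the pairs of
   the pairing that are not collapsed to a loop use fewer than eps s <= K := s/10
   distinct colour pairs. A colouring pi failing the pairing is thus determined by
   K colour pairs (at most m^(2K) choices), by its values off the 2s paired points,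
   and by one of at most m + 2K admissible colour pairs for each pair, so there are
   at most m^(2K) (m + 2K)^s m^(n - 2s) of them. A failing pair (pi_R, pi_B) fails
   at least s! ordered pairings (all reorderings of one), so a union bound over the
   n^(2s) ordered pairings bounds the failure probability by
   n^(2s) m^(4K) (m + 2K)^(2s) / (s! m^(4s)). With s^s <= s!^2, m + 2K <= 2n,
   s >= eps n and m >= n / ln^8 n, its 20th power is O(1 / n). *)

Lemma card_bigcup_le (I T : finType) (P : pred I) (F : I -> {set T}) :
  #|\bigcup_(i | P i) F i| <= \sum_(i | P i) #|F i|.
Proof.
elim/big_rec2: _ => [|i A k _ IH]; first by rewrite cards0.
by apply: leq_trans (leq_card_setU _ _) _; rewrite leq_add2l.
Qed.

Section PairValues.

Variables (T Y : finType) (s : nat) (u v : 'I_s -> T).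

Definition pair_values (f : {ffun T -> Y}) : {ffun 'I_s -> Y * Y} :=
  [ffun i => (f (u i), f (v i))].

Definition set_pair_values (f : {ffun T -> Y}) (w : {ffun 'I_s -> Y * Y}) :=
  [ffun x => if [pick i | u i == x] is Some i then (w i).1
             else if [pick i | v i == x] is Some i then (w i).2 else f x].

Lemma set_pair_valuesK f : set_pair_values f (pair_values f) = f.
Proof.
apply/ffunP => x; rewrite !ffunE.
by case: pickP => [i /eqP <-|_]; [|case: pickP => [i /eqP <-|_]]; rewrite ?ffunE.
Qed.

Lemma set_pair_values_idem f w w' :
  set_pair_values (set_pair_values f w) w' = set_pair_values f w'.
Proof.
apply/ffunP => x; rewrite !ffunE.
by case: pickP => // _; case: pickP.
Qed.

Hypotheses (u_inj : injective u) (v_inj : injective v)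
           (uv_disj : forall i j, u i != v j).

Lemma pair_values_set f w : pair_values (set_pair_values f w) = w.
Proof.
apply/ffunP => i; rewrite !ffunE.
case: pickP => [j /eqP/u_inj ->|]; last by move/(_ i); rewrite eqxx.
case: pickP => [k /eqP uv|_]; first by have := uv_disj k i; rewrite uv eqxx.
case: pickP => [l /eqP/v_inj ->|]; last by move/(_ i); rewrite eqxx.
by case: (w i).
Qed.

Lemma card_pair_values_in (A : {set Y * Y}) :
  #|[set f : {ffun T -> Y} | [forall i, pair_values f i \in A]]| * (#|Y| ^ 2) ^ s
    <= #|A| ^ s * #|Y| ^ #|T|.
Proof.
set S := [set f | _].
pose W := [set w : {ffun 'I_s -> Y * Y} | w \in ffun_on (mem A)].
pose code (fw : {ffun T -> Y} * {ffun 'I_s -> Y * Y}) :=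
  (set_pair_values fw.1 fw.2, pair_values fw.1).
(* (f, w) is recovered from code (f, w), which maps S x (Y * Y)^s into Y^T x A^s. *)
have code_inj : injective code.
  move=> [f w] [g w'] [e1 e2].
  by rewrite -(set_pair_valuesK f) -(set_pair_valuesK g) -e2 -(set_pair_values_idem f w)
     -(set_pair_values_idem g w') e1 -(pair_values_set f w) -(pair_values_set g w') e1.
have -> : #|S| * (#|Y| ^ 2) ^ s = #|code @: finset.setX S [set: {ffun 'I_s -> Y * Y}]|.
  by rewrite (card_imset _ code_inj) cardsX cardsT card_ffun card_prod card_ord.
have -> : #|A| ^ s * #|Y| ^ #|T| = #|finset.setX [set: {ffun T -> Y}] W|.
  rewrite cardsX cardsT card_ffun mulnC (eq_card (B := ffun_on (mem A))) ?card_ffun_on ?card_ord //.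
  by move=> w; rewrite inE.
apply/subset_leq_card/fintype.subsetP => _ /imsetP [[f w] /finset.setXP [fS _] ->].
rewrite !inE /=; apply/ffun_onP => i.
by move: fS; rewrite inE => /forallP.
Qed.

End PairValues.

Lemma eq_set2 (T : finType) (a b c d : T) :
  [set a; b] = [set c; d] -> (a, b) = (c, d) \/ (a, b) = (d, c).
Proof.
move=> e.
have /set2P ha : a \in [set c; d] by rewrite -e set21.
have /set2P hb : b \in [set c; d] by rewrite -e set22.
have /set2P hc : c \in [set a; b] by rewrite e set21.
have /set2P hd : d \in [set a; b] by rewrite e set22.
by case: ha hb hc hd => [] ? [] ? [] ? [] ?; subst; auto.
Qed.

Lemma exists_ffun_codom (X : finType) (K : nat) (x0 : X) (A : {set X}) :
  #|A| <= K -> exists t : {ffun 'I_K -> X}, A \subset codom t.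
Proof.
move=> AK; exists [ffun k : 'I_K => nth x0 (enum A) k].
apply/fintype.subsetP => x xA.
have xK : index x (enum A) < K by apply: leq_trans AK; rewrite cardE index_mem mem_enum.
by apply/codomP; exists (Ordinal xK); rewrite ffunE nth_index ?mem_enum.
Qed.

Definition edge_pairs (Y : finType) (K : nat) (t : {ffun 'I_K -> Y * Y}) : {set Y * Y} :=
  [set (y, y) | y : Y] :|: [set t k | k : 'I_K] :|: [set ((t k).2, (t k).1) | k : 'I_K].

Lemma card_edge_pairs (Y : finType) (K : nat) (t : {ffun 'I_K -> Y * Y}) :
  #|edge_pairs t| <= #|Y| + 2 * K.
Proof.
rewrite mul2n -addnn addnA.
apply: leq_trans (leq_card_setU _ _) _; apply: leq_add; last first.
  by apply: leq_trans (leq_imset_card _ _) _; rewrite card_ord.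
apply: leq_trans (leq_card_setU _ _) _; apply: leq_add.
  exact: leq_imset_card.
by apply: leq_trans (leq_imset_card _ _) _; rewrite card_ord.
Qed.

Section FirstEdges.

Variables (R : realType) (eps : R) (n m s : nat) (pi : 'I_n -> 'I_m) (u v : 'I_s -> 'I_n).

Definition pair_edge i : {set 'I_m} := [set pi (u i); pi (v i)].

Definition first_edges : {set 'I_s} :=
  [set i | (pi (u i) != pi (v i)) && [forall j : 'I_s, (j < i)%N ==> (pair_edge j != pair_edge i)]].

Lemma card_first_edges_lt :
  ~~ respectful eps pi u v -> (#|first_edges|%:R < eps * s%:R)%R.
Proof.
apply: contraNT; rewrite -leNgt => le_card.
apply/existsP; exists first_edges; rewrite le_card /=; apply/andP; split.
  by apply/forall_inP => i; rewrite inE => /andP[].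
apply/forall_inP => i iI; apply/forall_inP => j jI; apply/implyP => ij.
move: iI jI; rewrite !inE => /andP[_ /forallP first_i] /andP[_ /forallP first_j].
case: (ltngtP i j) => [lt_ij | lt_ji | /val_inj eq_ij].
- exact: (implyP (first_j i) lt_ij).
- by rewrite eq_sym; exact: (implyP (first_i j) lt_ji).
- by rewrite eq_ij eqxx in ij.
Qed.

Lemma first_edges_cover i :
  pi (u i) != pi (v i) -> exists2 j, j \in first_edges & pair_edge j = pair_edge i.
Proof.
move=> loopfree_i.
have [j /eqP e_ji min_j] := @arg_minnP _ i (fun j => pair_edge j == pair_edge i) val (eqxx _).
exists j => //; rewrite inE; apply/andP; split.
  by case: (eq_set2 e_ji) => -[-> ->] //; rewrite eq_sym.
apply/forallP => k; apply/implyP => lt_kj; apply/negP => /eqP e_kj.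
by have := min_j k; rewrite e_kj e_ji eqxx leqNgt lt_kj => /(_ isT).
Qed.

Lemma nonrespectful_edge_pairs (K : nat) :
  0 < m -> (forall k : nat, (k%:R < eps * s%:R)%R -> k <= K) ->
  ~~ respectful eps pi u v ->
  exists t : {ffun 'I_K -> 'I_m * 'I_m}, forall i, (pi (u i), pi (v i)) \in edge_pairs t.
Proof.
move=> m_gt0 le_K nresp.
have [|t sub_t] := @exists_ffun_codom _ K (Ordinal m_gt0, Ordinal m_gt0)
  [set (pi (u j), pi (v j)) | j in first_edges].
  exact/(leq_trans (leq_imset_card _ _))/le_K/card_first_edges_lt.
exists t => i; rewrite !inE.
have [loop_i|loopfree_i] := eqVneq (pi (u i)) (pi (v i)).
  by rewrite loop_i imset_f.
have [j jI e_ji] := first_edges_cover loopfree_i.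
have /codomP[k tk] : (pi (u j), pi (v j)) \in codom t.
  by apply: (fintype.subsetP sub_t); rewrite imset_f.
case: (eq_set2 (esym e_ji)) => ->; first by rewrite tk imset_f ?orbT.
by apply/orP; right; apply/imsetP; exists k; rewrite // -tk.
Qed.

End FirstEdges.

Lemma leq_exp2rW (a b e : nat) : a <= b -> a ^ e <= b ^ e.
Proof. by move=> le_ab; elim: e => // e IH; rewrite !expnS leq_mul. Qed.

Section FailingPairs.

Variables (R : realType) (eps : R) (n m s : nat).

Definition nonrespectful (u v : 'I_s -> 'I_n) : {set {ffun 'I_n -> 'I_m}} :=
  [set pi : {ffun 'I_n -> 'I_m} | ~~ respectful eps pi u v].

Lemma card_nonrespectful (K : nat) (u v : 'I_s -> 'I_n) :
  0 < m -> injective u -> injective v -> (forall i j, u i != v j) ->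
  (forall k : nat, (k%:R < eps * s%:R)%R -> k <= K) ->
  #|nonrespectful u v| * (m ^ 2) ^ s <= (m ^ 2) ^ K * (m + 2 * K) ^ s * m ^ n.
Proof.
move=> m_gt0 u_inj v_inj uv_disj le_K.
pose S (t : {ffun 'I_K -> 'I_m * 'I_m}) :=
  [set f : {ffun 'I_n -> 'I_m} | [forall i, pair_values u v f i \in edge_pairs t]].
have sub_S : nonrespectful u v \subset \bigcup_(t : {ffun 'I_K -> 'I_m * 'I_m}) S t.
  apply/fintype.subsetP => pi; rewrite inE => /(nonrespectful_edge_pairs m_gt0 le_K)[t in_t].
  by apply/bigcupP; exists t => //; rewrite inE; apply/forallP => i; rewrite ffunE.
apply: leq_trans (leq_mul (subset_leq_card sub_S) (leqnn _)) _.
apply: leq_trans (leq_mul (card_bigcup_le _ _) (leqnn _)) _.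
rewrite big_distrl /= -mulnA.
apply: (@leq_trans (\sum_(t : {ffun 'I_K -> 'I_m * 'I_m}) ((m + 2 * K) ^ s * m ^ n))).
  apply: leq_sum => t _.
  have := card_pair_values_in u_inj v_inj uv_disj (edge_pairs t); rewrite !card_ord.
  move/leq_trans; apply; rewrite leq_mul2r leq_exp2rW ?orbT //.
  by have := card_edge_pairs t; rewrite card_ord.
by rewrite sum_nat_const card_ffun card_prod !card_ord mulnn.
Qed.

Definition bad_pairings (p : {ffun 'I_n -> 'I_m} * {ffun 'I_n -> 'I_m}) :
    {set {ffun 'I_s -> 'I_n} * {ffun 'I_s -> 'I_n}} :=
  [set q : {ffun 'I_s -> 'I_n} * {ffun 'I_s -> 'I_n} |
     [&& is_pairing q.1 q.2, p.1 \in nonrespectful q.1 q.2 & p.2 \in nonrespectful q.1 q.2]].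

Lemma respectful_perm (pi : 'I_n -> 'I_m) (u v u' v' : 'I_s -> 'I_n) (sg : {perm 'I_s}) :
  u' =1 u \o sg -> v' =1 v \o sg -> respectful eps pi u' v' -> respectful eps pi u v.
Proof.
move=> eu ev /existsP[I /and3P[card_I loopfree distinct]].
apply/existsP; exists (sg @: I); rewrite card_imset; last exact: perm_inj.
rewrite card_I /=; apply/andP; split.
  apply/forall_inP => _ /imsetP[i iI ->].
  by have := forall_inP loopfree i iI; rewrite eu ev.
apply/forall_inP => _ /imsetP[i iI ->]; apply/forall_inP => _ /imsetP[j jI ->].
apply/implyP => ne_ij; have := implyP (forall_inP (forall_inP distinct i iI) j jI).
by rewrite !eu !ev; apply; apply: contra ne_ij => /eqP ->.
Qed.

Lemma is_pairing_perm (u v u' v' : 'I_s -> 'I_n) (sg : {perm 'I_s}) :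
  u' =1 u \o sg -> v' =1 v \o sg -> is_pairing u v -> is_pairing u' v'.
Proof.
move=> eu ev /and3P[/injectiveP u_inj /injectiveP v_inj /forallP uv_disj].
apply/and3P; split.
- by apply/injectiveP => i j; rewrite !eu => /u_inj/perm_inj.
- by apply/injectiveP => i j; rewrite !ev => /v_inj/perm_inj.
- by apply/forallP => i; apply/forallP => j; rewrite eu ev; exact: (forallP (uv_disj (sg i))).
Qed.

Lemma fact_le_card_bad_pairings p :
  ~~ eventE eps s p.1 p.2 -> s`! <= #|bad_pairings p|.
Proof.
case/forallPn => u /forallPn[v]; rewrite negb_imply negb_or => /andP[uv /andP[nresp1 nresp2]].
have /and3P[/injectiveP u_inj _ _] := uv.
pose permute (sg : {perm 'I_s}) := ([ffun i => u (sg i)], [ffun i => v (sg i)]).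
have permute_inj : injective permute.
  move=> sg sg' [/ffunP e _]; apply/permP => i.
  by have := e i; rewrite !ffunE => /u_inj.
rewrite -card_Sn -(card_imset _ permute_inj).
apply/subset_leq_card/fintype.subsetP => _ /imsetP[sg _ ->].
have eu : (permute sg).1 =1 u \o sg by move=> i; rewrite ffunE.
have ev : (permute sg).2 =1 v \o sg by move=> i; rewrite ffunE.
rewrite !inE /= (is_pairing_perm eu ev uv) /=.
by apply/andP; split; [apply: contra nresp1|apply: contra nresp2]; apply: respectful_perm eu ev.
Qed.

Lemma sum_card_bad_pairings :
  \sum_p #|bad_pairings p| =
  \sum_(q : {ffun 'I_s -> 'I_n} * {ffun 'I_s -> 'I_n} | is_pairing q.1 q.2)
     #|nonrespectful q.1 q.2| ^ 2.
Proof.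
transitivity (\sum_p \sum_q (q \in bad_pairings p : nat)).
  by apply: eq_bigr => p _; rewrite -sum1_card big_mkcond.
rewrite exchange_big (bigID (fun q : {ffun 'I_s -> 'I_n} * {ffun 'I_s -> 'I_n} =>
  is_pairing q.1 q.2)) /=.
rewrite [X in _ + X]big1 ?addn0 => [|q /negbTE not_pairing]; last first.
  by apply: big1 => p _; rewrite inE not_pairing.
apply: eq_bigr => q pairing_q; rewrite -mulnn -cardsX -sum1_card [RHS]big_mkcond /=.
by apply: eq_bigr => -[pi1 pi2] _; rewrite !inE pairing_q.
Qed.

Lemma card_failing_pairs (K : nat) :
  0 < m -> (forall k : nat, (k%:R < eps * s%:R)%R -> k <= K) ->
  #|[set p : {ffun 'I_n -> 'I_m} * {ffun 'I_n -> 'I_m} | ~~ eventE eps s p.1 p.2]|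
      * s`! * ((m ^ 2) ^ s) ^ 2
    <= (n ^ s) ^ 2 * ((m ^ 2) ^ K * (m + 2 * K) ^ s * m ^ n) ^ 2.
Proof.
move=> m_gt0 le_K; set F := [set p | _].
have le_bad : #|F| * s`! <= \sum_p #|bad_pairings p|.
  rewrite -sum_nat_const [X in _ <= X](bigID (mem F)) /=; apply: leq_trans (leq_addr _ _).
  by apply: leq_sum => p; rewrite inE; apply: fact_le_card_bad_pairings.
apply: leq_trans (leq_mul le_bad (leqnn _)) _.
rewrite sum_card_bad_pairings big_distrl /=.
apply: (@leq_trans (\sum_(q : {ffun 'I_s -> 'I_n} * {ffun 'I_s -> 'I_n})
                     ((m ^ 2) ^ K * (m + 2 * K) ^ s * m ^ n) ^ 2)).
  rewrite [X in _ <= X](bigID (fun q : {ffun 'I_s -> 'I_n} * {ffun 'I_s -> 'I_n} =>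
    is_pairing q.1 q.2)) /=.
  apply: leq_trans (leq_addr _ _).
  apply: leq_sum => q /and3P[/injectiveP u_inj /injectiveP v_inj /forallP uv_disj].
  rewrite -expnMn leq_exp2rW //; apply: card_nonrespectful => // i j.
  exact: (forallP (uv_disj i)).
by rewrite sum_nat_const card_prod !card_ffun !card_ord mulnn.
Qed.

End FailingPairs.

Lemma expn_self_le_fact_sqr (s : nat) : s ^ s <= s`! ^ 2.
Proof.
have fact_up : s`! = \prod_(i < s) i.+1 by rewrite fact_prod big_add1 big_mkord.
have fact_down : s`! = \prod_(i < s) (s - i).
  by rewrite fact_up (reindex_inj rev_ord_inj); apply: eq_bigr => i _; rewrite subnSK.
have -> : s ^ s = \prod_(i < s) s by rewrite prod_nat_const card_ord.
rewrite expnS expn1 {1}fact_up fact_down -big_split /=.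
by apply: leq_prod => i _; have := ltn_ord i; nia.
Qed.

Lemma failing_pow10_le (n m s K F : nat) :
  0 < m -> 10 * K <= s -> m + 2 * K <= 2 * n ->
  F * s`! * ((m ^ 2) ^ s) ^ 2 <= (n ^ s) ^ 2 * ((m ^ 2) ^ K * (m + 2 * K) ^ s * m ^ n) ^ 2 ->
  F ^ 10 * (s ^ 5 * m ^ 36) ^ s <= (2 ^ 20 * n ^ 40) ^ s * ((m ^ n) ^ 2) ^ 10.
Proof.
move=> m_gt0 le_Ks le_mKn.
rewrite (expnAC m 2 s) (expnAC m 2 K) (expnMn (s ^ 5)) (expnAC s 5) (expnAC m 36).
rewrite (expnMn (2 ^ 20)) (expnAC 2 20) (expnAC n 40).
have le_fact := expn_self_le_fact_sqr s.
have le_mK : (m ^ K) ^ 10 <= m ^ s by rewrite -expnM leq_pexp2l // mulnC.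
have le_mKs : (m + 2 * K) ^ s <= 2 ^ s * n ^ s by rewrite -expnMn leq_exp2rW.
have ms_gt0 : 0 < m ^ s by rewrite expn_gt0 m_gt0.
(* Once the s-th powers are atoms, ring normalizes the remaining exponents. *)
move: (m ^ s) (s ^ s) (n ^ s) (m ^ K) ((m + 2 * K) ^ s) (2 ^ s) (m ^ n) ms_gt0 le_fact le_mK le_mKs
  => a b c e d t f a_gt0 le_fact le_mK le_d count.
rewrite -(@leq_pmul2r (a ^ 4)) ?expn_gt0 ?a_gt0 //.
apply: (@leq_trans ((F * s`! * (a ^ 2) ^ 2) ^ 10)).
  have -> : (F * s`! * (a ^ 2) ^ 2) ^ 10 = F ^ 10 * (s`! ^ 2) ^ 5 * a ^ 36 * a ^ 4 by ring.
  by rewrite mulnA !leq_mul2r leq_mul2l leq_exp2rW ?orbT.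
apply: leq_trans (leq_exp2rW 10 count) _.
have -> : (c ^ 2 * (e ^ 2 * d * f) ^ 2) ^ 10 = c ^ 20 * (e ^ 10) ^ 4 * d ^ 20 * f ^ 20 by ring.
have -> : t ^ 20 * c ^ 40 * (f ^ 2) ^ 10 * a ^ 4 = c ^ 20 * a ^ 4 * (t * c) ^ 20 * f ^ 20 by ring.
apply: leq_mul => //; apply: leq_mul; last exact: leq_exp2rW.
by apply: leq_mul => //; apply: leq_exp2rW.
Qed.

Local Open Scope ring_scope.

Section RealEstimates.

Variable R : realType.

Lemma ln_exp_le_fact (x : R) (k : nat) : 1 <= x -> ln x ^+ k.+1 <= k.+1`!%:R * x.
Proof.
move=> x_ge1; have x_gt0 : 0 < x by apply: lt_le_trans x_ge1.
have := expR_ge1Dxn k (ln_ge0 x_ge1); rewrite lnK ?posrE // => le_x.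
rewrite mulrC -ler_pdivrMr ?ltr0n ?fact_gt0 //.
by apply: le_trans le_x; rewrite lerDr.
Qed.

Lemma absz_ceil_bounds (y : R) : 0 < y ->
  [/\ y <= (`|Num.ceil y|%N)%:R, (`|Num.ceil y|%N)%:R < y + 1 & (0 < `|Num.ceil y|)%N].
Proof.
move=> y_gt0; have ceil_ge0 : 0 <= Num.ceil y by rewrite ceil_ge0 (lt_trans _ y_gt0) ?ltrN10.
have -> : (`|Num.ceil y|%N)%:R = (Num.ceil y)%:~R :> R by rewrite natr_absz ger0_norm.
have /andP[lt_ceil ge_ceil] := ceil_itv y.
split => //; last by rewrite -(ltr0n R) natr_absz ger0_norm // (lt_le_trans y_gt0).
by move: lt_ceil; rewrite intrD -ltrBlDr.
Qed.

Lemma ratio_sqr_le (c eps x s m L : R) :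
  0 < eps -> 0 < x -> 0 < m -> 1 <= L -> eps * x <= s -> x <= m * L -> L ^+ 72 <= c * x ->
  (2 ^+ 20 * x ^+ 40 / (s ^+ 5 * m ^+ 36)) ^+ 2 <= 2 ^+ 40 * c / eps ^+ 10 / x.
Proof.
move=> eps_gt0 x_gt0 m_gt0 L_ge1 le_s le_mL le_L.
have L_gt0 : 0 < L by apply: lt_le_trans L_ge1.
have s_gt0 : 0 < s by apply: lt_le_trans le_s; rewrite mulr_gt0.
have c_ge0 : 0 <= c.
  by rewrite -(pmulr_lge0 _ x_gt0); apply: le_trans le_L; rewrite exprn_ge0 ?ltW.
have -> : (2 ^+ 20 * x ^+ 40 / (s ^+ 5 * m ^+ 36)) ^+ 2 = 2 ^+ 40 * x ^+ 80 / (s ^+ 10 * m ^+ 72).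
  by field; rewrite !gt_eqF.
have x_mL : x ^+ 72 <= m ^+ 72 * (c * x).
  apply: le_trans (ler_wpM2l (exprn_ge0 _ (ltW m_gt0)) le_L).
  by rewrite -exprMn lerXn2r // nnegrE ltW // (lt_le_trans x_gt0).
have eps_s : (eps * x) ^+ 10 <= s ^+ 10 by rewrite lerXn2r // nnegrE ltW ?mulr_gt0.
have x71 : x ^+ 71 <= c * m ^+ 72.
  rewrite -(ler_pM2r x_gt0) -exprSr mulrAC mulrC; apply: le_trans x_mL _.
  by rewrite ler_pM2l ?exprn_gt0.
have key : 2 ^+ 40 * x ^+ 80 * (eps ^+ 10 * x) <= 2 ^+ 40 * c * (s ^+ 10 * m ^+ 72).
  have -> : 2 ^+ 40 * x ^+ 80 * (eps ^+ 10 * x) = 2 ^+ 40 * (x ^+ 71 * (eps * x) ^+ 10) by ring.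
  have -> : 2 ^+ 40 * c * (s ^+ 10 * m ^+ 72) = 2 ^+ 40 * (c * m ^+ 72 * s ^+ 10) by ring.
  rewrite ler_pM2l ?exprn_gt0 //.
  by apply: ler_pM => //; rewrite ?exprn_ge0 // ltW ?mulr_gt0.
rewrite -subr_ge0.
have -> : 2 ^+ 40 * c / eps ^+ 10 / x - 2 ^+ 40 * x ^+ 80 / (s ^+ 10 * m ^+ 72) =
    (2 ^+ 40 * c * (s ^+ 10 * m ^+ 72) - 2 ^+ 40 * x ^+ 80 * (eps ^+ 10 * x))
    / (eps ^+ 10 * x * (s ^+ 10 * m ^+ 72)).
  by field; rewrite !gt_eqF.
by rewrite divr_ge0 ?subr_ge0 // ltW // !mulr_gt0 ?exprn_gt0.
Qed.

Lemma ln_ge1 (x : R) : expR 1 <= x -> 1 <= ln x.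
Proof.
move=> x_ge_e; rewrite -[leLHS](expRK 1) ler_ln ?posrE ?expR_gt0 //.
exact: lt_le_trans (expR_gt0 1) x_ge_e.
Qed.

Lemma mval_bounds (n : nat) : expR 1 <= n%:R :> R ->
  [/\ n%:R <= (mval R n)%:R * ln (n%:R : R) ^+ 8, (mval R n <= n)%N & (0 < mval R n)%N].
Proof.
move=> n_ge_e; have n_gt1 : 1 < n%:R :> R by apply: lt_le_trans n_ge_e; rewrite expR_gt1.
have L_ge1 : 1 <= ln n%:R ^+ 8 :> R by rewrite exprn_ege1 // ln_ge1.
have L_gt0 : 0 < ln n%:R ^+ 8 :> R by apply: lt_le_trans L_ge1.
have [le_m lt_m m_gt0] := absz_ceil_bounds (divr_gt0 (lt_trans ltr01 n_gt1) L_gt0).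
split => //; first by rewrite -ler_pdivrMr.
rewrite -ltnS -(ltr_nat R) -addn1 natrD; apply: lt_le_trans lt_m _.
by rewrite lerD2r ler_pdivrMr // ler_peMr // ltW // (lt_trans ltr01).
Qed.

Lemma sval_bounds (eps : R) (n : nat) : 0 < eps -> eps < 1 -> (0 < n)%N ->
  [/\ eps * n%:R <= (Defs.sval eps n)%:R, (Defs.sval eps n <= n)%N & (0 < Defs.sval eps n)%N].
Proof.
move=> eps_gt0 eps_lt1 n_gt0; have n_gt0' : 0 < n%:R :> R by rewrite ltr0n.
have [le_s lt_s s_gt0] := absz_ceil_bounds (mulr_gt0 eps_gt0 n_gt0').
split => //; rewrite -ltnS -(ltr_nat R) -addn1 natrD; apply: lt_le_trans lt_s _.
by rewrite lerD2r ger_pMl // ltW.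
Qed.

Lemma leq_div10 (eps : R) (s k : nat) :
  0 < eps -> eps < 1 / 10 -> k%:R < eps * s%:R -> (k <= s %/ 10)%N.
Proof.
move=> eps_gt0 eps_lt hk; rewrite leq_divRL // ltnW // -(ltr_nat R) natrM.
have s_ge0 : 0 <= s%:R :> R by [].
nra.
Qed.

Lemma one_sub_probE (eps : R) (n : nat) : (0 < mval R n)%N ->
  1 - probE eps n =
  #|[set p : {ffun 'I_n -> 'I_(mval R n)} * {ffun 'I_n -> 'I_(mval R n)} |
      ~~ eventE eps (Defs.sval eps n) p.1 p.2]|%:R / ((mval R n ^ n) ^ 2)%N%:R.
Proof.
move=> m_gt0; set m := mval R n; set s := Defs.sval eps n.
have card_pairs : #|{: {ffun 'I_n -> 'I_m} * {ffun 'I_n -> 'I_m}}| = ((m ^ n) ^ 2)%N.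
  by rewrite card_prod card_ffun !card_ord mulnn.
pose T := ({ffun 'I_n -> 'I_m} * {ffun 'I_n -> 'I_m})%type.
have card_split : (#|[pred p : T | eventE eps s p.1 p.2]| +
                   #|[set p : T | ~~ eventE eps s p.1 p.2]|)%N = ((m ^ n) ^ 2)%N.
  rewrite -card_pairs -(cardC [pred p : T | eventE eps s p.1 p.2]).
  by congr (_ + _)%N; apply: eq_card => p; rewrite !inE.
rewrite /probE -/m -/s card_pairs -card_split natrD.
by field; rewrite -natrD card_split pnatr_eq0 -lt0n !expn_gt0 m_gt0.
Qed.

Lemma pow20_le_of_pow10_le (r g b : R) (s : nat) :
  0 <= r -> 0 <= g -> (0 < s)%N -> g ^+ 2 <= b -> b <= 1 -> r ^+ 10 <= g ^+ s ->
  r ^+ 20 <= b.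
Proof.
move=> r_ge0 g_ge0 s_gt0 g_b b_le1 r_g.
have g_le1 : g <= 1.
  by rewrite -(ler_pXn2r (isT : (0 < 2)%N)) ?nnegrE // expr1n (le_trans g_b).
have gs_le_g : g ^+ s <= g by have := ler_wiXn2l g_ge0 g_le1 s_gt0; rewrite expr1.
apply: le_trans g_b; rewrite (_ : 20 = 10 * 2)%N // exprM.
by rewrite lerXn2r ?nnegrE ?exprn_ge0 // (le_trans r_g gs_le_g).
Qed.

(* 576 = 8 * 72, so that (ln n ^+ 8) ^+ 72 <= 576`! * n by [ln_exp_le_fact]. *)
Definition failure_bound (eps : R) : R := 2 ^+ 40 * 576`!%:R / eps ^+ 10.

Lemma one_sub_probE_pow20_le (eps : R) (n : nat) :
  0 < eps -> eps < 1 / 10 -> expR 1 <= n%:R :> R -> failure_bound eps <= n%:R ->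
  0 <= 1 - probE eps n /\ (1 - probE eps n) ^+ 20 <= failure_bound eps / n%:R.
Proof.
move=> eps_gt0 eps_lt n_ge_e n_ge_D.
have n_gt1 : 1 < n%:R :> R by apply: lt_le_trans n_ge_e; rewrite expR_gt1.
have n_gt0 : (0 < n)%N by rewrite -(ltr0n R) (lt_trans ltr01).
have [le_mL le_mn m_gt0] := mval_bounds n_ge_e.
have eps_lt1 : eps < 1 by apply: lt_trans eps_lt _; rewrite ltr_pdivrMr // mul1r ltr1n.
have [le_s le_sn s_gt0] := sval_bounds eps_gt0 eps_lt1 n_gt0.
have L_ge1 : 1 <= ln n%:R ^+ 8 :> R by rewrite exprn_ege1 // ln_ge1.
have le_L : (ln n%:R ^+ 8) ^+ 72 <= 576`!%:R * n%:R :> R.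
  by rewrite -exprM; apply: ln_exp_le_fact; rewrite ltW.
set m := mval R n in le_mL le_mn m_gt0 *; set s := Defs.sval eps n in le_s le_sn s_gt0 *.
have le_K : forall k : nat, k%:R < eps * s%:R -> (k <= s %/ 10)%N.
  by move=> k; apply: leq_div10.
have le_Ks : (10 * (s %/ 10) <= s)%N by rewrite mulnC leq_divM.
have le_mKn : (m + 2 * (s %/ 10) <= 2 * n)%N by lia.
have count := failing_pow10_le m_gt0 le_Ks le_mKn (card_failing_pairs n m_gt0 le_K).
rewrite one_sub_probE //; set F := (#|_|%:R : R); set T := (((m ^ n) ^ 2)%N%:R : R).
have T_gt0 : 0 < T by rewrite ltr0n !expn_gt0 m_gt0.
have r_ge0 : 0 <= F / T by rewrite divr_ge0 // ltW.
split => //.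
set g := 2 ^+ 20 * n%:R ^+ 40 / (s%:R ^+ 5 * m%:R ^+ 36) : R.
have r_g : (F / T) ^+ 10 <= g ^+ s.
  rewrite !expr_div_n ler_pdivrMr ?exprn_gt0 // mulrAC ler_pdivlMr ?exprn_gt0 ?mulr_gt0 ?ltr0n //.
  by rewrite /F /T -!natrX -!natrM -!natrX -!natrM ler_nat.
apply: pow20_le_of_pow10_le r_ge0 _ s_gt0 _ _ r_g.
- by rewrite divr_ge0 ?mulr_ge0 ?exprn_ge0.
- by apply: ratio_sqr_le eps_gt0 (lt_trans ltr01 n_gt1) _ L_ge1 le_s le_mL le_L; rewrite ltr0n.
- by rewrite ler_pdivrMr ?mul1r // (lt_trans ltr01).
Qed.

End RealEstimates.

Local Open Scope classical_set_scope.

Theorem lemma4p2 (R : realType) (eps : R) :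
  0 < eps -> eps < 1 / 10 ->
  probE eps n @[n --> \oo] --> (1 : R).
Proof.
move=> eps_gt0 eps_lt; apply/cvgrPdist_le => d d_gt0; near=> n.
have n_ge_e : expR 1 <= n%:R :> R by near: n; exact: nbhs_infty_ger.
have n_ge_D : failure_bound eps <= n%:R by near: n; exact: nbhs_infty_ger.
have n_ge_Dd : failure_bound eps / d ^+ 20 <= n%:R by near: n; exact: nbhs_infty_ger.
have [r_ge0 r_le] := one_sub_probE_pow20_le eps_gt0 eps_lt n_ge_e n_ge_D.
rewrite ger0_norm // -(ler_pXn2r (isT : (0 < 20)%N)) ?nnegrE //; last exact: ltW.
apply: le_trans r_le _; rewrite ler_pdivrMr ?(lt_le_trans (expR_gt0 1)) //.
by rewrite mulrC -ler_pdivrMr ?exprn_gt0.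
Unshelve. all: end_near.
Qed.
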